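(* The logic $\mathsf{sCond}_{\mathrm{ACL}}^{\mathbf{UC}}=\mathsf{ICK}\oplus(q\to(p\mathrel{\Box\!\!\!\rightarrow} q))\oplus(p\mathrel{\Box\!\!\!\rightarrow}((p\mathrel{\Box\!\!\!\rightarrow} q)\to q))$ is sound and complete with respect to the class of conditional frames $(X,\leq,\mathcal{R})$ such that for all $x,y\in X$ and $R_a\in\mathcal{R}$: $xR_ay$ implies $x\leq y$, and $x(R_a\circ\leq)y$ implies $y(R_a\circ\leq)y$.
   Context: Formulas: $\phi ::= p\mid\bot\mid\phi\wedge\phi\mid\phi\vee\phi\mid\phi\to\phi\mid\phi\mathrel{\Box\!\!\!\rightarrow}\phi$. $\mathsf{ICK}\oplus\Gamma$ is the smallest set containing intuitionistic propositional logic, $\Gamma$, $(p\mathrel{\Box\!\!\!\rightarrow}(q\wedge r))\leftrightarrow((p\mathrel{\Box\!\!\!\rightarrow} q)\wedge(p\mathrel{\Box\!\!\!\rightarrow} r))$ and $(p\mathrel{\Box\!\!\!\rightarrow}\top)\leftrightarrow\top$, closed under uniform substitution, modus ponens and congruence rules for both arguments of $\mathrel{\Box\!\!\!\rightarrow}$. A conditional frame is $(X,\leq,\mathcal{R})$, $(X,\leq)$ a nonempty preorder, $\mathcal{R}=\{R_a\mid a\text{ an upset}\}$ with $(\leq\circ R_a)\subseteq(R_a\circ\leq)$; valuations assign upsets to letters and $x\models\phi\mathrel{\Box\!\!\!\rightarrow}\psi$ iff every $y$ with $xR_{V(\phi)}y$ satisfies $\psi$. Relation composition $R\circ S$ relates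 $x$ to $z$ if $xRy$ and $ySz$ for some $y$. *)

Inductive form : Type :=
| Var : nat -> form
| Bot : form
| And : form -> form -> form
| Or : form -> form -> form
| Imp : form -> form -> form
| Cond : form -> form -> form.

Definition Top : form := Imp Bot Bot.
Definition Iff (a b : form) : form := And (Imp a b) (Imp b a).

Fixpoint subst (s : nat -> form) (f : form) : form :=
  match f with
  | Var n => s n
  | Bot => Bot
  | And a b => And (subst s a) (subst s b)
  | Or a b => Or (subst s a) (subst s b)
  | Imp a b => Imp (subst s a) (subst s b)
  | Cond a b => Cond (subst s a) (subst s b)
  end.

Inductive ipc_axiom : form -> Prop :=
| A1 a b : ipc_axiom (Imp a (Imp b a))
| A2 a b c : ipc_axiom (Imp (Imp a (Imp b c)) (Imp (Imp a b) (Imp a c)))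
| A3 a b : ipc_axiom (Imp (And a b) a)
| A4 a b : ipc_axiom (Imp (And a b) b)
| A5 a b : ipc_axiom (Imp a (Imp b (And a b)))
| A6 a b : ipc_axiom (Imp a (Or a b))
| A7 a b : ipc_axiom (Imp b (Or a b))
| A8 a b c : ipc_axiom (Imp (Imp a c) (Imp (Imp b c) (Imp (Or a b) c)))
| A9 a : ipc_axiom (Imp Bot a).

Definition p : form := Var 0.
Definition q : form := Var 1.
Definition r : form := Var 2.

Inductive ICK (Gamma : form -> Prop) : form -> Prop :=
| ICK_ipc a : ipc_axiom a -> ICK Gamma a
| ICK_gamma a : Gamma a -> ICK Gamma a
| ICK_conj : ICK Gamma (Iff (Cond p (And q r)) (And (Cond p q) (Cond p r)))
| ICK_top : ICK Gamma (Iff (Cond p Top) Top)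
| ICK_us s a : ICK Gamma a -> ICK Gamma (subst s a)
| ICK_mp a b : ICK Gamma (Imp a b) -> ICK Gamma a -> ICK Gamma b
| ICK_congl a b c : ICK Gamma (Iff a b) -> ICK Gamma (Iff (Cond a c) (Cond b c))
| ICK_congr a b c : ICK Gamma (Iff a b) -> ICK Gamma (Iff (Cond c a) (Cond c b)).

Inductive Gamma_UC : form -> Prop :=
| G1 : Gamma_UC (Imp q (Cond p q))
| G2 : Gamma_UC (Cond p (Imp (Cond p q) q)).

Definition sCond_ACL_UC : form -> Prop := ICK Gamma_UC.

Definition upset {X : Type} (le : X -> X -> Prop) (a : X -> Prop) : Prop :=
  forall x y, le x y -> a x -> a y.

(* Conditional frame (X, <=, {R_a | a upset}).  R is given on all predicates,
   but only its values on upsets matter; R_ext says R_a depends on a only as a set. *)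
Record cframe : Type := {
  W : Type;
  wle : W -> W -> Prop;
  wle_refl : forall x, wle x x;
  wle_trans : forall x y z, wle x y -> wle y z -> wle x z;
  w_inhab : W;
  R : (W -> Prop) -> W -> W -> Prop;
  R_ext : forall a b, (forall x, a x <-> b x) -> forall x y, R a x y <-> R b x y;
  (* (<= o R_a) subset (R_a o <=), composition in diagrammatic order *)
  R_coh : forall a, upset wle a -> forall x y,
      (exists z, wle x z /\ R a z y) -> exists z, R a x z /\ wle z y
}.

Fixpoint forces (F : cframe) (V : nat -> W F -> Prop) (x : W F) (f : form) : Prop :=
  match f with
  | Var n => V n x
  | Bot => False
  | And a b => forces F V x a /\ forces F V x b
  | Or a b => forces F V x a \/ forces F V x b
  | Imp a b => forall y, wle F x y -> forces F V y a -> forces F V y b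
  | Cond a b => forall y, R F (fun z => forces F V z a) x y -> forces F V y b
  end.

Definition valid_in (F : cframe) (f : form) : Prop :=
  forall V : nat -> W F -> Prop, (forall n, upset (wle F) (V n)) ->
    forall x, forces F V x f.

Definition UC_frame (F : cframe) : Prop :=
  forall a, upset (wle F) a ->
    (forall x y, R F a x y -> wle F x y) /\
    (forall x y, (exists z, R F a x z /\ wle F z y) ->
                 (exists z, R F a y z /\ wle F z y)).

From Stdlib Require Import Classical ClassicalEpsilon Cantor Lia.

(* Soundness: truth sets are upsets because (<= o R_a) is contained in (R_a o <=),
   so the substitution rule is sound; q -> (p []-> q) holds because R_a is contained
   in <=, and p []-> ((p []-> q) -> q) because a point above an R_a-successor of x has
   an R_a-successor below itself.
   Completeness: prime theories (built by a Lindenbaum construction along an injective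
   coding of formulas in nat) form a canonical frame for any consistent ICK (+) Gamma,
   in which P R_[phi] Q iff Q contains every chi with phi []-> chi in P.  For the two
   axioms above, q -> (p []-> q) makes R_[phi] contained in inclusion, and
   p []-> ((p []-> q) -> q) makes every Q containing an R_[phi]-successor of P an
   R_[phi]-successor of itself. *)

Section Semantics.
Variable F : cframe.

Lemma R_equiv (a b : W F -> Prop) x y :
  (forall z, a z <-> b z) -> R F a x y -> R F b x y.
Proof. intros E; apply (R_ext F a b E). Qed.

Lemma forces_upset V : (forall n, upset (wle F) (V n)) ->
  forall f, upset (wle F) (fun x => forces F V x f).
Proof.
  intros HV f; induction f as [n| |a IHa b IHb|a IHa b IHb|a IHa b IHb|a IHa b IHb];
    intros x y Hxy; simpl.
  - apply HV, Hxy.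
  - trivial.
  - intros [Ha Hb]; split; [eapply IHa | eapply IHb]; eauto.
  - intros [Ha|Hb]; [left; eapply IHa | right; eapply IHb]; eauto.
  - intros H z Hyz; apply H, (wle_trans F _ _ _ Hxy Hyz).
  - intros H w Hyw.
    destruct (R_coh F _ IHa x w (ex_intro _ y (conj Hxy Hyw))) as [z [Hxz Hzw]].
    eapply IHb; eauto.
Qed.

Lemma forces_subst V s f x :
  forces F V x (subst s f) <-> forces F (fun n y => forces F V y (s n)) x f.
Proof.
  revert x; induction f as [n| |a IHa b IHb|a IHa b IHb|a IHa b IHb|a IHa b IHb];
    intros x; simpl.
  - reflexivity.
  - reflexivity.
  - rewrite IHa, IHb; reflexivity.
  - rewrite IHa, IHb; reflexivity.
  - split; intros H y Hxy Hy; apply IHb, H, IHa; assumption.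
  - split; intros H y Hxy; apply IHb, H; revert Hxy; apply R_equiv;
      intros z; rewrite IHa; reflexivity.
Qed.

Lemma forces_Iff V x a b :
  (forall y, wle F x y -> forces F V y a <-> forces F V y b) -> forces F V x (Iff a b).
Proof. intros E; split; intros y Hxy; apply E, Hxy. Qed.

Lemma valid_Iff_equiv V a b : (forall n, upset (wle F) (V n)) ->
  valid_in F (Iff a b) -> forall x, forces F V x a <-> forces F V x b.
Proof.
  intros HV H x; destruct (H V HV x) as [Hab Hba].
  split; [apply Hab | apply Hba]; apply wle_refl.
Qed.

Lemma ipc_axiom_valid a : ipc_axiom a -> valid_in F a.
Proof.
  intros Ha V HV x; pose proof (forces_upset V HV) as Hup.
  destruct Ha; simpl; intros.
  all: firstorder eauto using wle_refl, wle_trans.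
Qed.

Lemma ICK_sound Gamma : (forall a, Gamma a -> valid_in F a) ->
  forall f, ICK Gamma f -> valid_in F f.
Proof.
  intros HGamma f Hf.
  induction Hf as [a Ha|a Ha| | |s a _ IH|a b _ IHab _ IHa|a b c _ IH|a b c _ IH];
    intros V HV x.
  - apply ipc_axiom_valid; assumption.
  - apply HGamma; assumption.
  - apply forces_Iff; intros y _; simpl; firstorder.
  - apply forces_Iff; intros y _; simpl; firstorder.
  - apply forces_subst, IH; intros n; apply forces_upset, HV.
  - apply (IHab V HV x x (wle_refl F x)), IHa, HV.
  - pose proof (valid_Iff_equiv V a b HV IH) as E.
    apply forces_Iff; intros y _; simpl.
    split; intros H w Hw; apply H; revert Hw; apply R_equiv; intros z; rewrite E; reflexivity.
  - pose proof (valid_Iff_equiv V a b HV IH) as E.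
    apply forces_Iff; intros y _; simpl.
    split; intros H w Hw; apply E, H, Hw.
Qed.
End Semantics.

Lemma UC_axioms_valid F : UC_frame F -> forall a, Gamma_UC a -> valid_in F a.
Proof.
  intros HF a Ha V HV x; pose proof (forces_upset F V HV) as Hup.
  destruct (HF _ (Hup p)) as [R_le R_return].
  destruct Ha; simpl.
  - intros y _ Hq z Hyz; exact (Hup q y z (R_le _ _ Hyz) Hq).
  - intros y Hxy z Hyz Hz.
    destruct (R_return x z (ex_intro _ y (conj Hxy Hyz))) as [u [Hzu Huz]].
    exact (Hup q u z Huz (Hz u Hzu)).
Qed.

Fixpoint code (f : form) : nat :=
  match f with
  | Var n => to_nat (0, n)
  | Bot => to_nat (1, 0)
  | And a b => to_nat (2, to_nat (code a, code b))
  | Or a b => to_nat (3, to_nat (code a, code b))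
  | Imp a b => to_nat (4, to_nat (code a, code b))
  | Cond a b => to_nat (5, to_nat (code a, code b))
  end.

Lemma to_nat_inj x y x' y' : to_nat (x, y) = to_nat (x', y') -> x = x' /\ y = y'.
Proof.
  intros H; apply (f_equal of_nat) in H; rewrite !cancel_of_to in H.
  injection H; split; assumption.
Qed.

Lemma code_inj f g : code f = code g -> f = g.
Proof.
  revert g; induction f as [n| |a IHa b IHb|a IHa b IHb|a IHa b IHb|a IHa b IHb];
    intros [m| |c d|c d|c d|c d] H; cbn [code] in H;
    apply to_nat_inj in H as [Hkind H]; try discriminate; try (apply to_nat_inj in H as [Hac Hbd]);
    f_equal; auto.
Qed.

Section Derivations.
Variable Gamma : form -> Prop.
Local Notation thm := (ICK Gamma).

Inductive derives (T : form -> Prop) : form -> Prop :=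
| derives_hyp a : T a -> derives T a
| derives_thm a : thm a -> derives T a
| derives_mp a b : derives T (Imp a b) -> derives T a -> derives T b.

Definition extend (T : form -> Prop) (a : form) : form -> Prop := fun x => T x \/ x = a.

Lemma derives_new T a : derives (extend T a) a.
Proof. apply derives_hyp; right; reflexivity. Qed.

Lemma derives_weaken (T T' : form -> Prop) b :
  (forall x, T x -> T' x) -> derives T b -> derives T' b.
Proof.
  intros H; induction 1; [apply derives_hyp | apply derives_thm | eapply derives_mp]; eauto.
Qed.

Lemma derives_empty b : derives (fun _ => False) b -> thm b.
Proof. induction 1; [contradiction | assumption | eapply ICK_mp; eassumption]. Qed.

Lemma derives_ax T a : ipc_axiom a -> derives T a.
Proof. intros; apply derives_thm, ICK_ipc; assumption. Qed.

Lemma derives_mp2 T a b c :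
  derives T (Imp a (Imp b c)) -> derives T a -> derives T b -> derives T c.
Proof. intros; eapply derives_mp; [eapply derives_mp|]; eassumption. Qed.

Lemma thm_imp_refl a : thm (Imp a a).
Proof.
  eapply ICK_mp; [eapply ICK_mp|]; apply ICK_ipc;
    [apply (A2 a (Imp a a) a) | apply A1 | apply (A1 a a)].
Qed.

Lemma derives_deduction T a b : derives (extend T a) b -> derives T (Imp a b).
Proof.
  induction 1 as [x Hx|x Hx|x y _ IHxy _ IHx].
  - destruct Hx as [Hx | ->].
    + eapply derives_mp; [apply derives_ax, A1 | apply derives_hyp, Hx].
    + apply derives_thm, thm_imp_refl.
  - eapply derives_mp; [apply derives_ax, A1 | apply derives_thm, Hx].
  - eapply derives_mp2; [apply derives_ax, A2 | exact IHxy | exact IHx].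
Qed.

Definition theory (T : form -> Prop) : Prop := forall b, derives T b -> T b.

Definition prime (T : form -> Prop) : Prop :=
  theory T /\ ~ T Bot /\ (forall a b, T (Or a b) -> T a \/ T b).

Record prime_theory : Type := { pt_set :> form -> Prop; pt_prime : prime pt_set }.

Section Lindenbaum.
Variables (T : form -> Prop) (phi : form).

Fixpoint stage (n : nat) : form -> Prop :=
  match n with
  | 0 => T
  | S n => fun x => stage n x \/ (code x = n /\ ~ derives (extend (stage n) x) phi)
  end.

Definition limit : form -> Prop := fun x => exists n, stage n x.

Lemma stage_mono n m : n <= m -> forall x, stage n x -> stage m x.
Proof. induction 1; simpl; auto. Qed.

Lemma limit_compact b : derives limit b -> exists n, derives (stage n) b.
Proof.
  induction 1 as [x [n Hx]|x Hx|x y _ [n Hxy] _ [m Hx]].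
  - exists n; apply derives_hyp, Hx.
  - exists 0; apply derives_thm, Hx.
  - exists (max n m); eapply derives_mp;
      (eapply derives_weaken; [apply stage_mono|]; [|eassumption]); lia.
Qed.

Hypothesis T_phi : ~ derives T phi.

Lemma stage_consistent n : ~ derives (stage n) phi.
Proof.
  induction n as [|n IH]; simpl; [exact T_phi|]; intros Hd.
  (* By [code_inj], at most one formula enters at stage [n + 1]. *)
  destruct (classic (exists y, code y = n /\ ~ derives (extend (stage n) y) phi))
    as [[y [Hy Hny]]|Hnone].
  - apply Hny; revert Hd; apply derives_weaken.
    intros x [Hx|[Hx _]]; [left; exact Hx | right; apply code_inj; congruence].
  - apply IH; revert Hd; apply derives_weaken.
    intros x [Hx|Hx]; [exact Hx | exfalso; apply Hnone; exists x; exact Hx].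
Qed.

Lemma limit_consistent : ~ derives limit phi.
Proof. intros Hd; destruct (limit_compact _ Hd) as [n Hn]; exact (stage_consistent n Hn). Qed.

Lemma limit_maximal a : ~ derives (extend limit a) phi -> limit a.
Proof.
  intros Ha; exists (S (code a)); right; split; [reflexivity|].
  intros Hd; apply Ha; revert Hd; apply derives_weaken.
  intros x [Hx|Hx]; [left; exists (code a); exact Hx | right; exact Hx].
Qed.

Lemma limit_theory : theory limit.
Proof.
  intros b Hb; apply limit_maximal; intros Hd; apply limit_consistent.
  eapply derives_mp; [apply derives_deduction, Hd | exact Hb].
Qed.

Lemma limit_prime : prime limit.
Proof.
  split; [exact limit_theory|split].
  - intros HBot; apply limit_consistent.
    eapply derives_mp; [apply derives_ax, A9 | apply derives_hyp, HBot].
  - intros a b Hab; apply NNPP; intros Hn.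
    assert (Ha : derives (extend limit a) phi)
      by (apply NNPP; intros Hd; apply Hn; left; apply limit_maximal, Hd).
    assert (Hb : derives (extend limit b) phi)
      by (apply NNPP; intros Hd; apply Hn; right; apply limit_maximal, Hd).
    apply limit_consistent; eapply derives_mp; [eapply derives_mp2|].
    + apply derives_ax, A8.
    + apply derives_deduction, Ha.
    + apply derives_deduction, Hb.
    + apply derives_hyp, Hab.
Qed.
End Lindenbaum.

Lemma lindenbaum T phi : ~ derives T phi ->
  exists P : prime_theory, (forall x, T x -> P x) /\ ~ P phi.
Proof.
  intros H; exists {| pt_set := limit T phi; pt_prime := limit_prime T phi H |}; split.
  - intros x Hx; exists 0; exact Hx.
  - intros Hphi; apply (limit_consistent T phi H), derives_hyp, Hphi.
Qed.

Lemma derives_of_primes T b :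
  (forall P : prime_theory, (forall x, T x -> P x) -> P b) -> derives T b.
Proof.
  intros H; apply NNPP; intros Hn.
  destruct (lindenbaum _ _ Hn) as [P [HTP HPb]]; exact (HPb (H P HTP)).
Qed.

Lemma thm_of_primes b : (forall P : prime_theory, P b) -> thm b.
Proof. intros H; apply derives_empty, derives_of_primes; intros P _; apply H. Qed.

Lemma thm_imp_of_primes a b : (forall P : prime_theory, P a -> P b) -> thm (Imp a b).
Proof.
  intros H; apply derives_empty, derives_deduction, derives_of_primes.
  intros P HP; apply H, HP; right; reflexivity.
Qed.

Lemma thm_Iff_intro a b : thm (Imp a b) -> thm (Imp b a) -> thm (Iff a b).
Proof. intros; eapply ICK_mp; [eapply ICK_mp; [apply ICK_ipc, A5|]|]; eassumption. Qed.

Lemma thm_Iff_imp a b : thm (Iff a b) -> thm (Imp a b).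
Proof. intros; eapply ICK_mp; [apply ICK_ipc, A3 | eassumption]. Qed.

Lemma thm_Iff_imp_rev a b : thm (Iff a b) -> thm (Imp b a).
Proof. intros; eapply ICK_mp; [apply ICK_ipc, A4 | eassumption]. Qed.

Definition subst3 (a b c : form) (n : nat) : form :=
  match n with 0 => a | 1 => b | _ => c end.

Lemma thm_cond_and a b c : thm (Iff (Cond a (And b c)) (And (Cond a b) (Cond a c))).
Proof. exact (ICK_us _ (subst3 a b c) _ (ICK_conj _)). Qed.

Lemma thm_cond_top a : thm (Iff (Cond a Top) Top).
Proof. exact (ICK_us _ (subst3 a a a) _ (ICK_top _)). Qed.

(* [c] is equivalent to [c /\ d], and [a []-> (c /\ d)] splits by the conjunction axiom. *)
Lemma thm_cond_mono a c d : thm (Imp c d) -> thm (Imp (Cond a c) (Cond a d)).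
Proof.
  intros Hcd.
  assert (Hc : thm (Iff c (And c d))).
  { apply thm_Iff_intro; [|apply ICK_ipc, A3].
    apply derives_empty, derives_deduction.
    eapply derives_mp2; [apply derives_ax, A5 | apply derives_new |].
    eapply derives_mp; [apply derives_thm, Hcd | apply derives_new]. }
  apply derives_empty, derives_deduction.
  eapply derives_mp; [apply derives_ax, A4|].
  eapply derives_mp; [apply derives_thm, thm_Iff_imp, thm_cond_and|].
  eapply derives_mp; [apply derives_thm, thm_Iff_imp, ICK_congr, Hc | apply derives_new].
Qed.

Lemma thm_cond_nec a c : thm c -> thm (Cond a c).
Proof.
  intros Hc; eapply ICK_mp; [apply (thm_cond_mono a Top c)|].
  - eapply ICK_mp; [apply ICK_ipc, A1 | exact Hc].
  - eapply ICK_mp; [apply thm_Iff_imp_rev, thm_cond_top | apply ICK_ipc, A9].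
Qed.

Lemma theory_thm T a : theory T -> thm a -> T a.
Proof. intros HT Ha; apply HT, derives_thm, Ha. Qed.

Lemma theory_mp T a b : theory T -> T (Imp a b) -> T a -> T b.
Proof. intros HT Hab Ha; apply HT; eapply derives_mp; apply derives_hyp; eassumption. Qed.

Lemma theory_thm_mp T a b : theory T -> thm (Imp a b) -> T a -> T b.
Proof. intros HT Hab; apply theory_mp, theory_thm; assumption. Qed.

Lemma cond_theory T a : theory T -> theory (fun c => T (Cond a c)).
Proof.
  intros HT c; induction 1 as [x Hx|x Hx|x y _ IHxy _ IHx].
  - exact Hx.
  - apply theory_thm, thm_cond_nec; assumption.
  - assert (Hpair : T (Cond a (And (Imp x y) x))).
    { eapply theory_thm_mp; [exact HT | apply thm_Iff_imp_rev, thm_cond_and |].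
      apply HT; eapply derives_mp2; [apply derives_ax, A5 | |]; apply derives_hyp; eassumption. }
    eapply theory_thm_mp; [exact HT | apply thm_cond_mono | exact Hpair].
    apply derives_empty, derives_deduction.
    eapply derives_mp; [eapply derives_mp; [apply derives_ax, A3|] |
                        eapply derives_mp; [apply derives_ax, A4|]]; apply derives_new.
Qed.
End Derivations.

Section PrimeTheories.
Variable Gamma : form -> Prop.
Local Notation thm := (ICK Gamma).
Local Notation prime_theory := (prime_theory Gamma).

Lemma prime_And (P : prime_theory) a b : P (And a b) <-> P a /\ P b.
Proof.
  destruct (pt_prime _ P) as [HP _]; split.
  - intros Hab; split; eapply theory_thm_mp; eauto; apply ICK_ipc; [apply A3 | apply A4].
  - intros [Ha Hb]; eapply theory_mp; [eauto | | exact Hb].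
    eapply theory_thm_mp; [eauto | apply ICK_ipc, A5 | exact Ha].
Qed.

Lemma prime_Or (P : prime_theory) a b : P (Or a b) <-> P a \/ P b.
Proof.
  destruct (pt_prime _ P) as [HP [_ Hor]]; split; [apply Hor|].
  intros [Ha|Hb]; eapply theory_thm_mp; eauto; apply ICK_ipc; [apply A6 | apply A7].
Qed.

Lemma prime_Imp (P : prime_theory) a b :
  P (Imp a b) <-> forall Q : prime_theory, (forall x, P x -> Q x) -> Q a -> Q b.
Proof.
  split.
  - intros Hab Q HPQ; eapply theory_mp; [apply (pt_prime _ Q) | apply HPQ, Hab].
  - intros H; apply (pt_prime _ P), derives_deduction, derives_of_primes.
    intros Q HQ; apply H; [intros x Hx; apply HQ; left; exact Hx | apply HQ; right; reflexivity].
Qed.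

Lemma prime_Cond (P : prime_theory) a b :
  P (Cond a b) <-> forall Q : prime_theory, (forall c, P (Cond a c) -> Q c) -> Q b.
Proof.
  split; [intros Hb Q HQ; apply HQ, Hb|].
  intros H; apply (cond_theory _ _ a (proj1 (pt_prime _ P))), derives_of_primes, H.
Qed.

Lemma thm_Iff_of_primes a b : (forall P : prime_theory, P a <-> P b) -> thm (Iff a b).
Proof. intros H; apply thm_Iff_intro; apply thm_imp_of_primes; apply H. Qed.
End PrimeTheories.

Section CanonicalModel.
Variable Gamma : form -> Prop.
Hypothesis Gamma_consistent : ~ ICK Gamma Bot.
Local Notation prime_theory := (prime_theory Gamma).

(* Upsets that are not truth sets of formulas get the empty relation. *)
Definition canon_R (A : prime_theory -> Prop) (P Q : prime_theory) : Prop :=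
  exists phi, (forall S : prime_theory, A S <-> S phi) /\
              forall chi, P (Cond phi chi) -> Q chi.

Lemma canon_R_ext (A B : prime_theory -> Prop) : (forall S, A S <-> B S) ->
  forall P Q : prime_theory, canon_R A P Q <-> canon_R B P Q.
Proof.
  intros E P Q; split; intros [phi [Hphi HPQ]]; exists phi; split; auto;
    intros S; rewrite <- Hphi, E; reflexivity.
Qed.

Lemma canon_R_coh A :
  forall P Q : prime_theory, (exists S : prime_theory, (forall a, P a -> S a) /\ canon_R A S Q) ->
    exists S : prime_theory, canon_R A P S /\ forall a, S a -> Q a.
Proof.
  intros P Q [S [HPS [phi [Hphi HSQ]]]]; exists Q; split; auto.
  exists phi; split; auto.
Qed.

Lemma prime_theory_inhabited : inhabited prime_theory.
Proof.
  assert (H : ~ derives Gamma (fun _ => False) Bot)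
    by (intros Hd; apply Gamma_consistent, derives_empty, Hd).
  destruct (lindenbaum _ _ _ H) as [P _]; exact (inhabits P).
Qed.

Definition canon : cframe := {|
  W := prime_theory;
  wle P Q := forall a, P a -> Q a;
  wle_refl P a Ha := Ha;
  wle_trans P Q S HPQ HQS a Ha := HQS a (HPQ a Ha);
  w_inhab := epsilon prime_theory_inhabited (fun _ => True);
  R := canon_R;
  R_ext := canon_R_ext;
  R_coh A _ := canon_R_coh A |}.

Definition canon_val (n : nat) (P : prime_theory) : Prop := P (Var n).

Lemma canon_truth f (P : prime_theory) : forces canon canon_val P f <-> P f.
Proof.
  revert P; induction f as [n| |a IHa b IHb|a IHa b IHb|a IHa b IHb|a IHa b IHb];
    intros P; simpl.
  - reflexivity.
  - split; [contradiction | apply (pt_prime _ P)].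
  - rewrite IHa, IHb, prime_And; reflexivity.
  - rewrite IHa, IHb, prime_Or; reflexivity.
  - rewrite prime_Imp; split; intros H Q HPQ Ha; apply IHb, H, IHa; assumption.
  - split.
    + intros H; apply prime_Cond; intros Q HQ; apply IHb, H.
      exists a; split; [intros S; apply IHa | exact HQ].
    + intros Hab Q [phi [Hphi HPQ]]; apply IHb, HPQ.
      assert (E : ICK Gamma (Iff (Cond a b) (Cond phi b))).
      { apply ICK_congl, thm_Iff_of_primes; intros S; rewrite <- IHa; apply Hphi. }
      eapply theory_thm_mp; [apply (pt_prime _ P) | apply thm_Iff_imp, E | exact Hab].
Qed.

Lemma canon_complete f : valid_in canon f -> ICK Gamma f.
Proof.
  intros H; apply thm_of_primes; intros P; apply canon_truth, H.
  intros n Q S HQS; apply HQS.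
Qed.
End CanonicalModel.

Definition point_frame : cframe := {|
  W := unit;
  wle _ _ := True;
  wle_refl _ := I;
  wle_trans _ _ _ _ _ := I;
  w_inhab := tt;
  R _ _ _ := False;
  R_ext _ _ _ _ _ := iff_refl False;
  R_coh _ _ _ _ H := match H with ex_intro _ _ (conj _ HR) => False_ind _ HR end |}.

Lemma point_frame_UC : UC_frame point_frame.
Proof. intros a _; split; [contradiction | intros x y [z [[] _]]]. Qed.

Lemma sCond_consistent : ~ sCond_ACL_UC Bot.
Proof.
  intros H; exact (ICK_sound point_frame _ (UC_axioms_valid _ point_frame_UC) Bot H
                     (fun _ _ => True) (fun _ _ _ _ _ => I) tt).
Qed.

Lemma canon_UC : UC_frame (canon Gamma_UC sCond_consistent).
Proof.
  intros A _; split.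
  - intros P Q [phi [_ HPQ]] x Hx; apply HPQ.
    eapply theory_thm_mp; [apply (pt_prime _ P) | | exact Hx].
    exact (ICK_us _ (subst3 phi x x) _ (ICK_gamma _ _ G1)).
  - intros P Q [S [[phi [Hphi HPS]] HSQ]]; exists Q; split; [|apply wle_refl].
    exists phi; split; [exact Hphi|]; intros chi Hchi.
    eapply theory_mp; [apply (pt_prime _ Q) | | exact Hchi].
    apply HSQ, HPS, (theory_thm _ _ _ (proj1 (pt_prime _ P))).
    exact (ICK_us _ (subst3 phi chi chi) _ (ICK_gamma _ _ G2)).
Qed.

Theorem theorem7p18 :
  forall f : form, sCond_ACL_UC f <-> (forall F : cframe, UC_frame F -> valid_in F f).
Proof.
  intros f; split.
  - intros Hf F HF; exact (ICK_sound F _ (UC_axioms_valid F HF) f Hf).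
  - intros Hvalid; apply (canon_complete _ sCond_consistent), Hvalid, canon_UC.
Qed.
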